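(* For all $\Psi\in D(H'_{\mathrm{kin}})$, $$\lim_{R\to\infty}\Big(2\sum_{k\in\overline B(0,R)\cap\mathbb Z^3_*}\sum_{p\in L_k}\lambda_{k,p}b_{k,p}^*b_{k,p}\Psi\Big)=\mathcal N_EH'_{\mathrm{kin}}\Psi.$$
   Context: For $k_F>0$ let $B_F=\overline B(0,k_F)\cap\mathbb Z^3$, $B_F^c=\mathbb Z^3\setminus B_F$, $N=|B_F|$, $\mathbb Z^3_*=\mathbb Z^3\setminus\{0\}$, $\mathcal H_N=\bigwedge^NL^2(\mathbb T^3)$ with $\mathbb T^3=[0,2\pi]^3$, and $c_p,c_p^*$ the fermionic annihilation/creation operators of $u_p(x)=(2\pi)^{-3/2}e^{ip\cdot x}$. On $\mathcal H_N$ let $H'_{\mathrm{kin}}=\sum_{p\in B_F^c}|p|^2c_p^*c_p-\sum_{p\in B_F}|p|^2c_pc_p^*$ with domain $D(H'_{\mathrm{kin}})=\bigwedge^NH^2(\mathbb T^3)$, and $\mathcal N_E=\sum_{p\in B_F^c}c_p^*c_p$. For $k\in\mathbb Z^3_*$: $L_k=\{p\in\mathbb Z^3:|p-k|\le k_F<|p|\}$, $\lambda_{k,p}=\tfrac12(|p|^2-|p-k|^2)$, $b_{k,p}=c_{p-k}^*c_p$. *)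

From HB Require Import structures.
From mathcomp Require Import all_boot all_order all_algebra.
From mathcomp Require Import finmap.
From mathcomp Require Import all_classical all_reals all_analysis.
From mathcomp Require Import complex.
Set Implicit Arguments. Unset Strict Implicit. Unset Printing Implicit Defensive.
Import Order.TTheory GRing.Theory Num.Theory.
Local Open Scope classical_set_scope.
Local Open Scope fset_scope.
Local Open Scope ring_scope.
Local Open Scope complex_scope.

Definition Z3 := (int * int * int)%type.
Definition z3zero : Z3 := (0, 0, 0).
Definition z3sub (p k : Z3) : Z3 := (p.1.1 - k.1.1, p.1.2 - k.1.2, p.2 - k.2).
Definition sqn (p : Z3) : int := p.1.1 ^+ 2 + p.1.2 ^+ 2 + p.2 ^+ 2.

(* strict lexicographic order on Z^3: used to fix the sign convention of
   Slater determinants |S> = c*_{q1} ... c*_{qn} |0>, q1 < ... < qn *)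
Definition ltlex (q p : Z3) : bool :=
  (q.1.1 < p.1.1) || ((q.1.1 == p.1.1) &&
  ((q.1.2 < p.1.2) || ((q.1.2 == p.1.2) && (q.2 < p.2)))).

Section Fock.
Variable R : realType.
Local Notation C := R[i].

Definition znorm (p : Z3) : R := Num.sqrt ((sqn p)%:~R).
Definition csq (z : C) : R := (@complex.Re R z) ^+ 2 + (@complex.Im R z) ^+ 2.

(* Fermionic Fock space over L^2(T^3), written in the occupation-number basis
   of the plane waves u_p: a vector is the family of its coefficients
   psi(S) on the Slater determinants |S>, S a finite subset of Z^3.
   (All operators below act coefficientwise; square summability is imposed
   separately.) *)
Definition Fock := {fset Z3} -> C.

Definition fsign (p : Z3) (S : {fset Z3}) : C :=
  (-1) ^+ #|` [fset q in S | ltlex q p]|.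

Definition cop (p : Z3) (psi : Fock) : Fock := fun T =>
  if p \in T then 0 else fsign p T * psi (p |` T).
Definition cstar (p : Z3) (psi : Fock) : Fock := fun T =>
  if p \in T then fsign p (T `\ p) * psi (T `\ p) else 0.

Definition supp_sum (I : choiceType) (A : set I) (F : I -> C) : C :=
  (\sum_(i \in A `&` [set i | F i != 0]) F i)%R.

Variable kF : R.

Definition BF : set Z3 := [set p | znorm p <= kF].
Definition Npart : nat := #|` fset_set BF|.

Definition Hkin (psi : Fock) : Fock := fun T =>
  supp_sum (~` BF) (fun p => ((sqn p)%:~R : R)%:C * cstar p (cop p psi) T)
  - supp_sum BF (fun p => ((sqn p)%:~R : R)%:C * cop p (cstar p psi) T).

Definition NE (psi : Fock) : Fock := fun T =>
  supp_sum (~` BF) (fun p => cstar p (cop p psi) T).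

Definition Lset (k : Z3) : set Z3 :=
  [set p | znorm (z3sub p k) <= kF /\ kF < znorm p].
Definition lam (k p : Z3) : R := ((sqn p)%:~R - (sqn (z3sub p k))%:~R) / 2.
Definition bop (k p : Z3) (psi : Fock) : Fock := cstar (z3sub p k) (cop p psi).
Definition bstar (k p : Z3) (psi : Fock) : Fock := cstar p (cop (z3sub p k) psi).

Definition Kball (r : R) : set Z3 := [set k | k <> z3zero /\ znorm k <= r].

Definition Lsum (r : R) (psi : Fock) : Fock := fun T =>
  2 * (\sum_(k \in Kball r) \sum_(p \in Lset k)
          (lam k p)%:C * bstar k p (bop k p psi) T)%R.

Definition kinw (S : {fset Z3}) : R := (\sum_(p <- S) (sqn p)%:~R)%R.

(* D(H'_kin) = wedge^N H^2(T^3): N-particle vectors with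
   sum_S (1 + sum_{p in S}|p|^2)^2 |psi(S)|^2 < oo *)
Definition in_domH (psi : Fock) : Prop :=
  (forall S, psi S != 0 -> #|` S| = Npart) /\
  (\esum_(S in [set: {fset Z3}]) (((1 + kinw S) ^+ 2 * csq (psi S))%:E) < +oo)%E.

Definition sqnorm (psi : Fock) : \bar R :=
  (\esum_(S in [set: {fset Z3}]) (csq (psi S))%:E)%E.

End Fock.

From HB Require Import structures.
From mathcomp Require Import all_boot all_order all_algebra.
From mathcomp Require Import finmap.
From mathcomp Require Import all_classical all_reals all_analysis.
From mathcomp Require Import complex.
From mathcomp Require Import ring zify.
Set Implicit Arguments. Unset Strict Implicit. Unset Printing Implicit Defensive.
Import Order.TTheory GRing.Theory Num.Theory.
Local Open Scope classical_set_scope.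
Local Open Scope ring_scope.

(* All operators involved are diagonal in the basis of Slater determinants
   |T>.  On an N-particle determinant, N_E H'_kin acts by
   #(T \ B_F) * (sum_{T \ B_F} |p|^2 - sum_{B_F \ T} |q|^2), which is the sum
   of |p|^2 - |q|^2 over all particle-hole pairs (p, q) in (T \ B_F) x (B_F \ T)
   because #(T \ B_F) = #(B_F \ T); the truncated operator sum, after the
   change of variables q = p - k, is the same sum restricted to |p - q| <= R.
   The error on |T> is thus the sum over the pairs with |p - q| > R: it lies
   between 0 and N sum_{p in T} |p|^2, and it vanishes once R exceeds the
   largest |p - q|.  Dominated convergence for the counting measure on
   determinants concludes, the domination being the H^2 bound of the domain. *)

Lemma z3subK p k : z3sub p (z3sub p k) = k.
Proof. by case: p k => [[a b] c] [[x y] z]; rewrite /z3sub /=; congr (_, _, _); lia. Qed.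

Lemma z3sub_eq0 p q : (z3sub p q == z3zero) = (p == q).
Proof.
case: p q => [[a b] c] [[x y] z]; rewrite /z3sub /z3zero /=.
by apply/eqP/eqP => [[? ? ?]|[-> -> ->]]; [congr (_, _, _); lia | rewrite !subrr].
Qed.

Lemma z3sub_neq k p : k != z3zero -> z3sub p k != p.
Proof. by apply: contraNneq => kp; rewrite -[k](z3subK p) kp z3sub_eq0. Qed.

Lemma sqn_ge0 p : 0 <= sqn p.
Proof. by rewrite /sqn !addr_ge0 // sqr_ge0. Qed.

Section Fock_algebra.
Variable R : realType.
Local Open Scope fset_scope.

Lemma fsign_mul_self p S : fsign R p S * fsign R p S = 1.
Proof. by rewrite /fsign -exprMn mulrNN mulr1 expr1n. Qed.

Lemma cstar_copE p (phi : Fock R) T :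
  cstar p (cop p phi) T = if p \in T then phi T else 0.
Proof.
rewrite /cstar /cop; case: ifP => pT //.
by rewrite in_fsetD1 eqxx /= (fsetD1K pT) mulrA fsign_mul_self mul1r.
Qed.

Lemma cop_cstarE p (phi : Fock R) T :
  cop p (cstar p phi) T = if p \in T then 0 else phi T.
Proof.
rewrite /cop /cstar; case: ifP => pT //.
by rewrite fsetU11 fsetU1K ?pT // mulrA fsign_mul_self mul1r.
Qed.

Lemma bstar_bopE k p (phi : Fock R) T : k != z3zero ->
  bstar k p (bop k p phi) T =
  if (p \in T) && (z3sub p k \notin T) then phi T else 0.
Proof.
move=> k0; have qp := z3sub_neq p k0.
rewrite /bstar /bop {1}/cstar; case: ifP => pT //=.
rewrite cop_cstarE in_fsetD1 qp /=; case: ifP => qT /=; first by rewrite mulr0.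
by rewrite /cop in_fsetD1 eqxx /= fsetD1K // mulrA fsign_mul_self mul1r.
Qed.

End Fock_algebra.

Lemma fsbig_fsetE (R : Type) (idx : R) (op : Monoid.com_law idx)
    (I : choiceType) (A : set I) (F : I -> R) (S : {fset I}) :
  (forall i, A i -> i \notin S -> F i = idx) ->
  \big[op/idx]_(i \in A) F i =
  \big[op/idx]_(i <- S) (if i \in A then F i else idx).
Proof.
move=> FS; rewrite fsbig_mkcond (fsbigTE S) // => i iS.
by rewrite /patch; case: ifP => // /set_mem Ai; exact: FS.
Qed.
Arguments fsbig_fsetE {R idx op I A F} S.

Lemma supp_sumE (R : realType) (I : choiceType) (A : set I) (F : I -> R[i]) :
  supp_sum A F = \sum_(i \in A) F i.
Proof.
rewrite /supp_sum (fsbig_widen _ A) // => i [Ai /not_andP[//|]] /=.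
by move/negP; rewrite negbK => /eqP.
Qed.

Lemma sumr_const_fset (R : pzRingType) (I : choiceType) (A : {fset I})
    (P : pred I) (c : R) :
  \sum_(i <- A | P i) c = (#|` [fset i in A | P i]%fset|)%:R * c.
Proof.
rewrite big_fset_condE card_fset_sum1 natr_sum mulr_suml.
by apply: eq_bigr => i _; rewrite mul1r.
Qed.

Lemma ler_sum_mem (R : numDomainType) (I : eqType) (s : seq I) (F : I -> R) x :
  uniq s -> x \in s -> (forall y, 0 <= F y) -> F x <= \sum_(y <- s) F y.
Proof. by move=> us xs F0; rewrite (bigD1_seq x) //= lerDl sumr_ge0. Qed.

Section esum_dominated.
Variable R : realType.
Local Open Scope ereal_scope.

Lemma cvge0_squeeze {T : Type} {F : set_system T} {FF : Filter F}
    (g : T -> \bar R) :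
  (forall e : R, (0 < e)%R -> \forall t \near F, 0 <= g t <= e%:E) ->
  g @ F --> 0.
Proof.
move=> gle; have gfin e t : 0 <= g t <= e%:E -> g t \is a fin_num.
  by case/andP=> g0 ge; rewrite ge0_fin_numE // (le_lt_trans ge) ?ltry.
apply/fine_cvgP; split; first by apply: filterS (gle 1%R ltr01); exact: gfin.
apply/cvgrPdist_le => e e0; apply: filterS (gle e e0) => t gt /=.
case/andP: (gt) => g0 ge.
by rewrite sub0r normrN ger0_norm ?fine_ge0 // -lee_fin fineK // (gfin e).
Qed.

Lemma esum_cvg0_dominated (T : choiceType) (G : T -> R) (f : R -> T -> R)
    (M : T -> R) :
  (forall r x, (0 <= f r x <= G x)%R) ->
  \esum_(x in [set: T]) (G x)%:E < +oo ->
  (forall r x, M x < r -> f r x = 0)%R ->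
  \esum_(x in [set: T]) (f r x)%:E @[r --> +oo%R] --> 0.
Proof.
move=> fG Gfin fM.
have G0 x : (0 <= G x)%R by case/andP: (fG 0%R x) => /le_trans; apply.
apply: cvge0_squeeze => e e0.
set s := \esum_(x in [set: T]) (G x)%:E.
have s_fin : s \is a fin_num.
  by rewrite ge0_fin_numE // esum_ge0 // => x _; rewrite lee_fin.
have [_ [X [finX _] <-] sX] := ub_ereal_sup_adherent e0 s_fin.
rewrite -[ereal_sup _]/s fsumEFin // in sX.
have G_outX : \esum_(x in [set: T] `&` ~` X) (G x)%:E < e%:E.
  have := esumID X [set: T] (fun x => (G x)%:E) (fun x _ => G0 x).
  rewrite -/s setTI esum_fset // ?fsumEFin // => [sE|x _]; last by rewrite lee_fin.
  by rewrite -(@lteD2lE _ (\sum_(i \in X) G i)%:E) // -sE -lteBlDr.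
have Mlt x : \forall r \near +oo%R, (M x < r)%R := nbhs_pinfty_gt (num_real _).
apply: filterS (@filter_bigI _ _ (fset_set X) (fun x => [set r | (M x < r)%R]) _ _
  (fun x _ => Mlt x)) => r Mr.
have fX x : X x -> f r x = 0%R.
  by move=> Xx; apply/fM/Mr; rewrite /= in_fset_set // inE.
rewrite esum_ge0 => [|x _]; last by rewrite lee_fin; case/andP: (fG r x).
rewrite (esumID X) => [|x _]; last by rewrite lee_fin; case/andP: (fG r x).
rewrite esum1 ?add0e => [|x [_ Xx]]; last by rewrite fX.
apply/ltW/(le_lt_trans _ G_outX)/le_esum => x _.
by rewrite lee_fin; case/andP: (fG r x).
Qed.

Lemma esum_scale_lty (T : choiceType) (g : T -> R) (K : R) :
  (0 <= K)%R -> (forall x, 0 <= g x)%R ->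
  \esum_(x in [set: T]) (g x)%:E < +oo ->
  \esum_(x in [set: T]) (K * g x)%:E < +oo.
Proof.
move=> K0 g0 gfin.
have g_fin : \esum_(x in [set: T]) (g x)%:E \is a fin_num.
  by rewrite ge0_fin_numE // esum_ge0 // => x _; rewrite lee_fin.
apply: (@le_lt_trans _ _ (K%:E * \esum_(x in [set: T]) (g x)%:E)); last first.
  by rewrite -(fineK g_fin) -EFinM ltry.
apply: ge_ereal_sup => _ [X [finX _] <-].
rewrite fsbig_finite //=; under eq_bigr do rewrite EFinM.
rewrite -ge0_sume_distrr => [|x _]; last by rewrite lee_fin.
rewrite lee_wpmul2l ?lee_fin // -fsbig_finite //.
by apply: esum_ge; exists X.
Qed.

End esum_dominated.

Section Lattice.
Variable R : realType.

Lemma znorm_sqr p : znorm R p ^+ 2 = (sqn p)%:~R.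
Proof. by rewrite /znorm sqr_sqrtr // ler0z sqn_ge0. Qed.

Lemma znorm_ge0 p : 0 <= znorm R p.
Proof. exact: sqrtr_ge0. Qed.

Lemma finite_int_abs_lt (n : nat) : finite_set [set z : int | `|z| < n%:Z].
Proof.
apply: (@sub_finite_set _ _ [set (i%:Z - n%:Z) | i in `I_(2 * n)%N]).
  by move=> z /= zn; exists (absz (z + n%:Z)) => /=; lia.
by apply: finite_image; exact: finite_II.
Qed.

Lemma finite_znorm_le (rho : R) : finite_set [set p | znorm R p <= rho].
Proof.
pose n := Num.Def.archi_bound `|rho|.
have rho_n : rho < n%:R by apply: le_lt_trans (ler_norm rho) (archi_boundP _).
pose I := [set z : int | `|z| < n%:Z].
apply: (@sub_finite_set _ _ (I `*` I `*` I)); last first.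
  by apply: finite_setX; [apply: finite_setX|]; exact: finite_int_abs_lt.
move=> [[a b] c] /= hp.
have sqn_lt : sqn (a, b, c) < (n * n)%N%:Z.
  rewrite -(ltr_int R) -znorm_sqr PoszM rmorphM /= expr2.
  by apply: ltr_pM; rewrite ?znorm_ge0 // (le_lt_trans hp).
move: sqn_lt; rewrite /sqn /= !expr2 => sqn_lt.
have := sqr_ge0 a; have := sqr_ge0 b; have := sqr_ge0 c; rewrite !expr2 => *.
by rewrite /I /=; split; [split|]; nia.
Qed.

End Lattice.

Section Coefficients.
Variables (R : realType) (kF : R).
Local Open Scope complex_scope.
Local Notation B := (fset_set (BF kF)).
Local Notation w p := ((sqn p)%:~R : R).

Let finB : finite_set (BF kF) := finite_znorm_le kF.

Lemma finite_Kball (r : R) : finite_set (Kball r).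
Proof. by apply: sub_finite_set (finite_znorm_le r) => k []. Qed.

Lemma memB p : (p \in B) = (znorm R p <= kF).
Proof. by rewrite in_fset_set //; apply/idP/idP => [/set_mem|/mem_set]. Qed.

Lemma memBC p : (p \in ~` BF kF) = (p \notin B).
Proof. by rewrite in_setC in_fset_set. Qed.

Lemma memKball k (r : R) : (k \in Kball r) = (k != z3zero) && (znorm R k <= r).
Proof. by apply/idP/andP => [/set_mem [/eqP]|[/eqP ? ?]] //; exact: mem_set. Qed.

Lemma memLset k p :
  (p \in Lset kF k) = (znorm R (z3sub p k) <= kF) && (kF < znorm R p).
Proof. by apply/idP/andP => [/set_mem|] [? ?] //; exact: mem_set. Qed.

Definition kin_exc (T : {fset Z3}) : R := \sum_(p <- T | p \notin B) w p.
Definition kin_hole (T : {fset Z3}) : R := \sum_(q <- B | q \notin T) w q.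
Definition n_exc (T : {fset Z3}) : R := \sum_(p <- T | p \notin B) 1.

Definition ph_energy (P : Z3 -> Z3 -> bool) (T : {fset Z3}) : R :=
  \sum_(p <- T | p \notin B) \sum_(q <- B | (q \notin T) && P p q) (w p - w q).

Definition ph_near (r : R) p q := znorm R (z3sub p q) <= r.

Lemma Hkin_diag (psi : Fock R) T :
  Hkin kF psi T = (kin_exc T - kin_hole T)%:C * psi T.
Proof.
rewrite /Hkin !supp_sumE (fsbig_fsetE T); last first.
  by move=> p _ pT; rewrite cstar_copE (negbTE pT) mulr0.
rewrite fsbig_finite // rmorphB /= mulrBl /kin_exc /kin_hole !rmorph_sum.
rewrite !mulr_suml; congr (_ - _); rewrite [RHS]big_mkcond /=.
  by apply: eq_big_seq => p pT; rewrite cstar_copE pT memBC; case: ifP.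
by apply: eq_bigr => p _; rewrite cop_cstarE; case: ifP; rewrite ?mulr0.
Qed.

Lemma NE_diag (phi : Fock R) T : NE kF phi T = (n_exc T)%:C * phi T.
Proof.
rewrite /NE supp_sumE (fsbig_fsetE T) => [|p _ pT]; last first.
  by rewrite cstar_copE (negbTE pT).
rewrite /n_exc rmorph_sum mulr_suml [RHS]big_mkcond /=.
by apply: eq_big_seq => p pT; rewrite cstar_copE pT memBC; case: ifP; rewrite ?mul1r.
Qed.

(* lambda_{k,p} times the eigenvalue of b*_{k,p} b_{k,p} on |T>. *)
Definition bb_coef (T : {fset Z3}) k p : R :=
  if (p \in Lset kF k) && (z3sub p k \notin T) then lam R k p else 0.

Lemma Lsum_fsum (r : R) (psi : Fock R) T :
  Lsum kF r psi T =
  (2 * \sum_(k <- fset_set (Kball r)) \sum_(p <- T) bb_coef T k p)%:C * psi T.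
Proof.
have finK := finite_Kball r.
rewrite /Lsum fsbig_finite // rmorphM rmorph_nat rmorph_sum -mulrA mulr_suml.
congr (_ * _); apply: eq_big_seq => k; rewrite in_fset_set // memKball.
case/andP=> k0 _.
rewrite (fsbig_fsetE T) => [|p _ pT]; last by rewrite bstar_bopE // (negbTE pT) mulr0.
rewrite rmorph_sum mulr_suml; apply: eq_big_seq => p pT.
rewrite /bb_coef bstar_bopE // pT /=.
by case: (p \in _); case: (_ \notin T); rewrite /= ?mulr0 ?rmorph0 ?mul0r.
Qed.

(* The substitution q = p - k. *)
Lemma sum_Kball_bb_coef (r : R) T p :
  \sum_(k <- fset_set (Kball r)) bb_coef T k p =
  if p \in B then 0
  else (\sum_(q <- B | (q \notin T) && ph_near r p q) (w p - w q)) / 2.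
Proof.
rewrite -fsbig_finite; last exact: finite_Kball.
rewrite fsbig_mkcond.
rewrite (reindex_fsbigT (z3sub p)); last by exists (z3sub p) => q; rewrite z3subK.
rewrite (fsbigTE B) => [|q qB]; last first.
  by rewrite /patch /bb_coef memLset z3subK -memB (negbTE qB) /= if_same.
case: ifP => pB.
  by apply: big1 => q _; rewrite /patch /bb_coef memLset ltNge -(memB p) pB andbF /= if_same.
rewrite mulr_suml [RHS]big_mkcond.
apply: eq_big_seq => q qB; rewrite /patch memKball /bb_coef memLset z3subK.
rewrite z3sub_eq0 -(memB q) qB ltNge -(memB p) pB /= /lam z3subK /ph_near.
have -> : p != q by apply: contraFneq pB => ->.
by case: (q \in T); case: (_ <= r); rewrite /= ?mul0r.
Qed.

Lemma Lsum_diag r (psi : Fock R) T :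
  Lsum kF r psi T = (ph_energy (ph_near r) T)%:C * psi T.
Proof.
rewrite Lsum_fsum exchange_big /=; congr (_%:C * _).
under eq_bigr do rewrite sum_Kball_bb_coef.
rewrite /ph_energy [X in _ = X]big_mkcond /= mulr_sumr; apply: eq_bigr => p _.
by case: ifP => _; rewrite ?mulr0 // mulrC divfK ?pnatr_eq0.
Qed.

Lemma ph_energy_split P T :
  ph_energy P T + ph_energy (fun p q => ~~ P p q) T = ph_energy (fun _ _ => true) T.
Proof.
rewrite /ph_energy -big_split; apply: eq_bigr => p _.
by rewrite [RHS](bigID (P p)) /=; congr (_ + _); apply: eq_bigl => q; rewrite andbT.
Qed.

Lemma card_exc_hole T : #|` T| = #|` B| ->
  #|` [fset p in T | p \notin B]%fset| = #|` [fset q in B | q \notin T]%fset|.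
Proof.
have exc : [fset p in T | p \notin B]%fset = (T `\` B)%fset.
  by apply/fsetP => x; rewrite !inE andbC.
have hole : [fset q in B | q \notin T]%fset = (B `\` T)%fset.
  by apply/fsetP => x; rewrite !inE andbC.
rewrite exc hole; have := cardfsID B T; have := cardfsID T B; rewrite fsetIC; lia.
Qed.

Lemma ph_energy_all T : #|` T| = #|` B| ->
  ph_energy (fun _ _ => true) T = n_exc T * (kin_exc T - kin_hole T).
Proof.
move=> TB; rewrite /ph_energy /n_exc /kin_exc /kin_hole.
under eq_bigr do under eq_bigl do rewrite andbT.
under eq_bigr do rewrite sumrB sumr_const_fset.
by rewrite sumrB -mulr_sumr !sumr_const_fset card_exc_hole //; ring.
Qed.

Lemma Lsum_sub_NE_Hkin (psi : Fock R) r T :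
  (forall S, psi S != 0 -> #|` S| = Npart kF) ->
  Lsum kF r psi T - NE kF (Hkin kF psi) T =
  (- ph_energy (fun p q => ~~ ph_near r p q) T)%:C * psi T.
Proof.
move=> psi_N; rewrite Lsum_diag NE_diag Hkin_diag.
have [->|/psi_N TN] := eqVneq (psi T) 0; first by rewrite !mulr0 subrr.
rewrite mulrA -rmorphM -mulrBl -rmorphB -ph_energy_all //.
by rewrite -(ph_energy_split (ph_near r)) opprD addNKr.
Qed.

Lemma ph_energy_ge0 P T : 0 <= ph_energy P T.
Proof.
rewrite /ph_energy big_seq_cond sumr_ge0 // => p /andP[_ pB].
rewrite big_seq_cond sumr_ge0 // => q /andP[qB _].
rewrite subr_ge0 -!znorm_sqr lerXn2r ?nnegrE ?znorm_ge0 // ltW //.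
by move: qB pB; rewrite !memB -ltNge; exact: le_lt_trans.
Qed.

Lemma ph_energy_le P T : ph_energy P T <= (Npart kF)%:R * kinw R T.
Proof.
have w0 p : 0 <= w p by rewrite ler0z sqn_ge0.
rewrite /kinw mulr_sumr /ph_energy big_mkcond /=; apply: ler_sum => p _.
case: ifP => _; last by rewrite mulr_ge0.
rewrite /Npart card_fset_sum1 natr_sum mulr_suml big_mkcond /=.
by apply: ler_sum => q _; case: ifP => _; rewrite mul1r // lerBlDr lerDl.
Qed.

Definition ph_radius (T : {fset Z3}) : R :=
  \sum_(p <- T) \sum_(q <- B) znorm R (z3sub p q).

Lemma ph_energy_far_eq0 r T :
  ph_radius T < r -> ph_energy (fun p q => ~~ ph_near r p q) T = 0.
Proof.
move=> Tr; rewrite /ph_energy big_seq_cond big1 // => p /andP[pT _].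
rewrite big_seq_cond big1 // => q /andP[qB /andP[_]]; rewrite /ph_near -ltNge.
suff : znorm R (z3sub p q) < r by move=> /lt_trans/[apply]; rewrite ltxx.
apply: le_lt_trans Tr; apply: le_trans (ler_sum_mem (fset_uniq _) pT _).
  by apply: (ler_sum_mem (fset_uniq _) qB) => ?; exact: znorm_ge0.
by move=> ?; apply: sumr_ge0 => ? _; exact: znorm_ge0.
Qed.

End Coefficients.

Lemma csq_ge0 (R : realType) (z : R[i]) : 0 <= csq z.
Proof. by rewrite /csq addr_ge0 // sqr_ge0. Qed.

Lemma csqM (R : realType) (x : R) (z : R[i]) : csq (x%:C * z)%C = x ^+ 2 * csq z.
Proof. by case: z => a b; rewrite /csq /=; ring. Qed.

Lemma kinw_ge0 (R : realType) T : 0 <= kinw R T.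
Proof. by apply: sumr_ge0 => p _; rewrite ler0z sqn_ge0. Qed.

Theorem mainTheorem15 (R : realType) (kF : R) (hkF : 0 < kF)
  (psi : Fock R) (hpsi : in_domH kF psi) :
  (sqnorm (fun T => Lsum kF r psi T - NE kF (Hkin kF psi) T)) @[r --> +oo]
    --> 0%E.
Proof.
have [psi_N psi_fin] := hpsi.
pose n : R := (Npart kF)%:R.
apply: (@esum_cvg0_dominated R _
  (fun T => n ^+ 2 * ((1 + kinw R T) ^+ 2 * csq (psi T))) _ (ph_radius kF)).
- move=> r T; rewrite Lsum_sub_NE_Hkin // csqM sqrrN mulr_ge0 ?sqr_ge0 ?csq_ge0 //=.
  rewrite mulrA -exprMn ler_wpM2r ?csq_ge0 // ler_sqr ?nnegrE ?ph_energy_ge0 //.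
  + apply: le_trans (ph_energy_le _ _ _) _.
    by rewrite ler_wpM2l ?ler0n // lerDr.
  + by rewrite mulr_ge0 ?ler0n // addr_ge0 // kinw_ge0.
- apply: esum_scale_lty; [exact: sqr_ge0 | move=> T | exact: psi_fin].
  by rewrite mulr_ge0 ?sqr_ge0 ?csq_ge0.
- move=> r T Tr.
  by rewrite Lsum_sub_NE_Hkin // ph_energy_far_eq0 // oppr0 csqM expr0n mul0r.
Qed.
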